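(* For any positive integer $k$, $dim_s(C_{2k+1}\times C_{2k+1})=(2k+1)(k+1)$.
   Context: $C_n$ is the cycle on $n$ vertices. The direct product $G\times H$ has vertex set $V(G)\times V(H)$, with $(a,b)$ adjacent to $(c,d)$ iff $ac\in E(G)$ and $bd\in E(H)$. For a connected graph $G$, $I_G[u,v]$ is the set of vertices lying on some shortest $u$–$v$ path; a vertex $w$ strongly resolves $u,v$ if $v\in I_G[u,w]$ or $u\in I_G[v,w]$; a strong resolving set is a set $S\subseteq V(G)$ such that every pair of vertices is strongly resolved by some vertex of $S$; $dim_s(G)$ is the minimum cardinality of a strong resolving set. *)

From mathcomp Require Import all_boot all_order.
Set Implicit Arguments. Unset Strict Implicit. Unset Printing Implicit Defensive.

Definition cycle_graph (n : nat) : rel 'I_n :=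
  fun i j => (val j == i.+1 %% n) || (val i == j.+1 %% n).
Arguments cycle_graph n : clear implicits.

Definition direct_prod (T1 T2 : finType) (e1 : rel T1) (e2 : rel T2)
  : rel (T1 * T2) :=
  fun x y => e1 x.1 y.1 && e2 x.2 y.2.

Section Dist.
Variables (T : finType) (e : rel T).

Definition walkn (n : nat) (x y : T) : bool :=
  [exists p : n.-tuple T, path e x p && (last x p == y)].

(* graph distance: least n with an x-y walk of length n
   (default #|T| if none, which never happens in a connected graph) *)
Definition dist (x y : T) : nat :=
  \big[minn/#|T|]_(n < #|T| | walkn n x y) n.

Definition in_interval (u v w : T) : bool :=
  [exists p : (dist u v).-tuple T,
     [&& path e u p, last u p == v & w \in u :: p]].

Definition strongly_resolves (w u v : T) : bool :=
  in_interval u w v || in_interval v w u.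

Definition strong_resolving_set (S : {set T}) : bool :=
  [forall u, forall v, (u != v) ==> [exists w in S, strongly_resolves w u v]].

Definition dim_s : nat :=
  \big[minn/#|T|]_(S : {set T} | strong_resolving_set S) #|S|.

End Dist.

Definition connected_graph (T : finType) (e : rel T) : Prop :=
  forall x y : T, exists n, walkn e n x y.

(* Let n = 2k+1 and N = 2k.  A walk of length l in C_n advances by p - m (mod n) with
   p + m = l, so any two vertices of C_n × C_n are joined by a walk of length exactly N, while
   two vertices adjacent in the Cartesian product C_n □ C_n are joined by no shorter walk: its
   projections would have lengths of opposite parity.  Such pairs are mutually maximally
   distant, so every strong resolving set contains one end of each of them; in each row this
   is a vertex cover of the odd cycle C_n, hence has at least k+1 elements.  Conversely, the
   n(k+1) vertices whose coordinate sum is even modulo n form a strong resolving set: for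
   u ≠ v there is a neighbour w of u in C_n □ C_n with v on a shortest u-w path, and w lies in
   the set whenever u does not. *)

From mathcomp Require Import all_boot all_order zify.
Set Implicit Arguments. Unset Strict Implicit. Unset Printing Implicit Defensive.
Import Order.TTheory.

Section Walks.
Variables (T : finType) (e : rel T).

Lemma walknP n (x y : T) :
  reflect (exists s, [/\ size s = n, path e x s & last x s = y]) (walkn e n x y).
Proof.
apply: (iffP existsP) => [[p /andP [px /eqP py]] | [s [sn px py]]].
  by exists p; rewrite size_tuple.
have sn' : size s == n by rewrite sn.
by exists (Tuple sn'); rewrite /= px py eqxx.
Qed.

Lemma walkn0 (x y : T) : walkn e 0 x y = (x == y).
Proof.
apply/walknP/eqP => [[s [/size0nil -> _ <-]] // | <-].
by exists [::].
Qed.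

Lemma walknS n (x y : T) : walkn e n.+1 x y = [exists z, e x z && walkn e n z y].
Proof.
apply/walknP/existsP => [[[|z s] [//= [sn] /andP [xz zs] sy]] | [z /andP [xz]]].
  by exists z; rewrite xz; apply/walknP; exists s.
case/walknP=> s [sn zs sy].
by exists (z :: s); rewrite /= xz sn.
Qed.

Lemma dist_min n (x y : T) :
  walkn e n x y -> n < #|T| -> walkn e (dist e x y) x y /\ dist e x y <= n.
Proof.
move=> xy_n n_lt.
have dist_le : dist e x y <= n.
  exact: (@bigmin_le_cond _ nat _ _ (Ordinal n_lt) (fun m : 'I_#|T| => walkn e m x y) val).
split=> //.
have : (dist e x y == #|T|) || walkn e (dist e x y) x y.
  rewrite /dist; elim/big_ind: _ => [|a b|i ->]; rewrite ?eqxx ?orbT //.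
  by rewrite /minn; case: ifP.
by case/orP => // /eqP dist_eq; move: dist_le; rewrite dist_eq leqNgt n_lt.
Qed.

Lemma in_interval_cat l1 l2 (u v w : T) :
  walkn e l1 u v -> walkn e l2 v w -> l1 + l2 = dist e u w -> in_interval e u w v.
Proof.
move=> /walknP [s1 [<- us1 s1v]] /walknP [s2 [<- vs2 s2w]] l12.
have s12 : size (s1 ++ s2) == dist e u w by rewrite size_cat l12.
apply/existsP; exists (Tuple s12).
by rewrite /= cat_path us1 s1v vs2 last_cat s1v s2w eqxx -cat_cons mem_cat -{1}s1v mem_last.
Qed.

Lemma in_interval_last (u v : T) : walkn e (dist e u v) u v -> in_interval e u v v.
Proof. by move=> uv; apply: (in_interval_cat (l2 := 0) uv); rewrite ?walkn0 ?addn0. Qed.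

(* The part of a shortest [u]-[w] path up to [v] is already as long as the whole path. *)
Lemma in_interval_far D (u v w : T) :
  u != v -> (forall l, walkn e l u v -> D <= l) -> dist e u w <= D ->
  in_interval e u w v -> w = v.
Proof.
move=> uv far dist_le /existsP [p /and3P [up /eqP pw]].
rewrite in_cons eq_sym (negbTE uv) /= => vp.
have := size_tuple p; move: up pw; case/splitPr: vp => p1 p2.
rewrite cat_path /= => /and3P [up1 p1v vp2] pw sp.
have : D <= (size p1).+1.
  apply: far; apply/walknP; exists (rcons p1 v).
  by rewrite size_rcons rcons_path up1 p1v last_rcons.
case: p2 vp2 pw sp => [|z p2] _; first by rewrite last_cat.
rewrite size_cat /= => _ sp; lia.
Qed.

Lemma strongly_resolves_far D (u v w : T) :
  u != v -> (forall l, walkn e l u v -> D <= l) -> (forall l, walkn e l v u -> D <= l) ->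
  dist e u w <= D -> dist e v w <= D -> strongly_resolves e w u v -> w = u \/ w = v.
Proof.
move=> uv far_uv far_vu du dv /orP [uwv | vwu].
  by right; exact: in_interval_far uv far_uv du uwv.
by left; apply: in_interval_far far_vu dv vwu; rewrite eq_sym.
Qed.

Lemma dim_s_le (S : {set T}) : strong_resolving_set e S -> dim_s e <= #|S|.
Proof. exact: (@bigmin_le_cond _ nat _ _ S (strong_resolving_set e) (fun S => #|S|)). Qed.

Lemma dim_s_ge m :
  m <= #|T| -> (forall S, strong_resolving_set e S -> m <= #|S|) -> m <= dim_s e.
Proof. exact: (@le_bigmin _ nat _ _ (fun S : {set T} => #|S|) #|T| m). Qed.

End Walks.

Lemma walkn_direct_prod (T1 T2 : finType) (e1 : rel T1) (e2 : rel T2) n (x y : T1 * T2) :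
  walkn (direct_prod e1 e2) n x y = walkn e1 n x.1 y.1 && walkn e2 n x.2 y.2.
Proof.
elim: n x => [|n IH] x; first by rewrite !walkn0; case: x; case: y.
rewrite !walknS; apply/existsP/andP => [[z /andP [/andP [xz1 xz2]]] | ].
  by rewrite IH => /andP [zy1 zy2]; split; apply/existsP; [exists z.1 | exists z.2];
     rewrite ?xz1 ?xz2.
case=> /existsP [z1 /andP [xz1 zy1]] /existsP [z2 /andP [xz2 zy2]].
by exists (z1, z2); rewrite /direct_prod xz1 xz2 IH zy1 zy2.
Qed.

(* Walks of length [l] from [a] to [b] on the cycle [Z/nZ], counted by their [p] forward
   and [m] backward steps. *)
Definition mod_walk (n a b l : nat) : Prop :=
  exists p m, p + m = l /\ a + p = b + m %[mod n].

Section ModWalk.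
Variable n : nat.

Lemma mod_walk_sym a b l : mod_walk n a b l -> mod_walk n b a l.
Proof. by case=> p [m [pml abm]]; exists m, p; rewrite addnC. Qed.

Lemma eq_mod_walk a a' b b' l :
  a = a' %[mod n] -> b = b' %[mod n] -> mod_walk n a b l -> mod_walk n a' b' l.
Proof.
move=> aa' bb' [p [m [pml abm]]]; exists p, m; split=> //.
by rewrite -modnDml -aa' modnDml abm -modnDml bb' modnDml.
Qed.

Lemma mod_walkDl c a b l : mod_walk n (c + a) (c + b) l <-> mod_walk n a b l.
Proof.
split=> -[p [m [pml abm]]]; exists p, m; split=> //; move: abm; rewrite -!addnA.
  by move/eqP; rewrite eqn_modDl => /eqP.
by move=> abm; rewrite -modnDmr abm modnDmr.
Qed.

Lemma mod_walk_transl c a b x y l :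
  c + a = x %[mod n] -> c + b = y %[mod n] -> mod_walk n a b l -> mod_walk n x y l.
Proof. by move=> ax bx /(mod_walkDl c); apply: eq_mod_walk. Qed.

Lemma mod_walk0 a b : mod_walk n a b 0 <-> a = b %[mod n].
Proof.
split=> [[p [m [/eqP]]] | ab]; last by exists 0, 0; rewrite !addn0.
by rewrite addn_eq0 => /andP [/eqP -> /eqP ->]; rewrite !addn0.
Qed.

Lemma mod_walkS a b l : mod_walk n a b l.+1 <-> mod_walk n a.+1 b l \/ mod_walk n a b.+1 l.
Proof.
split=> [[[|p] [m [pml abm]]] | [] [p [m [pml abm]]]].
- case: m pml abm => [|m] // [pml] abm; right; exists 0, m.
  by rewrite addSnnS.
- by left; exists p, m; split; [case: pml | rewrite addSnnS].
- by exists p.+1, m; split; [rewrite addSn pml | rewrite -addSnnS].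
- by exists p, m.+1; split; [rewrite addnS pml | rewrite addnS -addSn].
Qed.

Lemma mod_walk_intro a b l p m c d :
  p + m = l -> a + p + c * n = b + m + d * n -> mod_walk n a b l.
Proof.
move=> pml abm; exists p, m; split=> //.
by rewrite -(modnMDl c) -[in RHS](modnMDl d) addnC abm addnC.
Qed.

End ModWalk.

Section Cycle.
Variable N : nat.
Local Notation n := N.+1.
Local Notation C := (cycle_graph n).

Lemma cycle_graph_sym : symmetric C.
Proof. by move=> x y; rewrite /cycle_graph orbC. Qed.

Lemma cycle_graphE (x y : 'I_n) : C x y = (y == x.+1 %[mod n]) || (x == y.+1 %[mod n]).
Proof. by rewrite /cycle_graph !(modn_small (ltn_ord _)). Qed.

Lemma cycle_graph_ordS (x : 'I_n) : C x (ordS x).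
Proof. by rewrite /cycle_graph eqxx. Qed.

Lemma cycle_graph_ord_pred (x : 'I_n) : C x (ord_pred x).
Proof. by rewrite cycle_graph_sym -{2}(ord_predK x) cycle_graph_ordS. Qed.

Lemma cycle_walknP (x y : 'I_n) l : walkn C l x y <-> mod_walk n x y l.
Proof.
elim: l x => [|l IH] x.
  rewrite walkn0 mod_walk0 !(modn_small (ltn_ord _)).
  by split=> [/eqP -> | /val_inj ->].
rewrite walknS mod_walkS; split.
  case/existsP=> z /andP []; rewrite cycle_graphE => /orP [] /eqP xz /IH zy.
    by left; apply: eq_mod_walk xz _ zy.
  by right; apply: (mod_walk_transl (c := 1) (esym xz) _ zy).
case=> [xy | xy]; apply/existsP.
  exists (ordS x); rewrite cycle_graph_ordS IH /=.
  by apply: eq_mod_walk xy; rewrite ?modn_mod.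
exists (ord_pred x); rewrite cycle_graph_ord_pred IH /=.
apply/(@mod_walkDl _ 1); apply: eq_mod_walk xy => //.
by rewrite add1n -{1}(ord_predK x) /= modn_mod.
Qed.

Lemma exists_cycle_graph_step (x : 'I_n) e :
  e = 1 \/ e = N -> exists2 w : 'I_n, C x w & x + e = w %[mod n].
Proof.
case=> ->; [exists (ordS x) | exists (ord_pred x)]; rewrite ?cycle_graph_ordS
  ?cycle_graph_ord_pred //= modn_mod; first by rewrite addn1.
by rewrite addnS.
Qed.

Definition offset (x y : 'I_n) : nat := (y + n - x) %% n.

Lemma offset_lt (x y : 'I_n) : offset x y < n.
Proof. exact: ltn_pmod. Qed.

Lemma addn_offset (x y : 'I_n) : x + offset x y = y %[mod n].
Proof. by rewrite modnDmr subnKC ?modnDr //; have := ltn_ord x; lia. Qed.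

Lemma offset_eq0 (x y : 'I_n) : (offset x y == 0) = (x == y).
Proof.
apply/eqP/eqP => [o0 | ->]; last by rewrite /offset addKn modnn.
by apply: val_inj; have := addn_offset x y; rewrite o0 addn0 !(modn_small (ltn_ord _)).
Qed.

End Cycle.

Section OddCycle.
Variable k : nat.
Local Notation N := k.*2.
Local Notation n := k.*2.+1.
Local Notation C := (cycle_graph n).

Lemma mod_walk_refl_even a l : mod_walk n a a l -> l < n -> ~~ odd l.
Proof. by case=> p [m [<- /eqP]]; rewrite eqn_modDl => /eqP + ?; rewrite !modn_small; lia. Qed.

Lemma mod_walk_succ_odd a l : mod_walk n a a.+1 l -> l < N -> odd l.
Proof.
by case=> p [m [<- /eqP]]; rewrite addSnnS eqn_modDl => /eqP + ?; rewrite !modn_small; lia.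
Qed.

Lemma cycle_graph_walk_odd (x y : 'I_n) l : C x y -> mod_walk n x y l -> l < N -> odd l.
Proof.
rewrite cycle_graphE => /orP [] /eqP xy walk_xy.
  exact/mod_walk_succ_odd/(eq_mod_walk (erefl _) xy walk_xy).
exact/mod_walk_succ_odd/(eq_mod_walk (erefl _) xy (mod_walk_sym walk_xy)).
Qed.

Lemma mod_walk_diam a b : a < n -> b < n -> mod_walk n a b N.
Proof.
move=> an bn; case: (leqP a b) => ab.
  case: (boolP (odd (b - a))) => odd_ba.
    by apply: (@mod_walk_intro _ _ _ _ ((b - a)./2) (N - (b - a)./2) 1 0); lia.
  by apply: (@mod_walk_intro _ _ _ _ (k + (b - a)./2) (k - (b - a)./2) 0 0); lia.
case: (boolP (odd (b + n - a))) => odd_ba.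
  by apply: (@mod_walk_intro _ _ _ _ ((b + n - a)./2) (N - (b + n - a)./2) 0 0); lia.
by apply: (@mod_walk_intro _ _ _ _ (k + (b + n - a)./2) (k - (b + n - a)./2) 0 1); lia.
Qed.

(* [minn b (n - b)] is the distance from [0] to [b] in [C_n]. *)
Lemma mod_walk_loop b l :
  b < n -> minn b (n - b) <= l -> minn b (n - b) <= N - l -> l <= N ->
  odd l = odd (minn b (n - b)) -> mod_walk n 0 b l /\ mod_walk n b 0 (N - l).
Proof.
move=> bn bl bNl lN; case: (leqP b k) => bk parity; split.
- by apply: (@mod_walk_intro _ _ _ _ (b + (l - b)./2) ((l - b)./2) 0 0); lia.
- by apply: (@mod_walk_intro _ _ _ _ ((N - l - b)./2) (b + (N - l - b)./2) 0 0); lia.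
- by apply: (@mod_walk_intro _ _ _ _ ((l - (n - b))./2) (n - b + (l - (n - b))./2) 1 0); lia.
- by apply: (@mod_walk_intro _ _ _ _ (n - b + (N - l - (n - b))./2) ((N - l - (n - b))./2) 0 1);
    lia.
Qed.

(* In coordinates relative to [u], with [v = (a, b)]: [v] lies on a walk of length [N] from
   [u] to its neighbour [(e, 0)], reached after [l1] steps. *)
Lemma mod_walk_split a b :
  0 < a -> a < n -> b < n -> minn b (n - b) <= minn a (n - a) ->
  exists e l1 l2, [/\ e = 1 \/ e = N, l1 + l2 = N, mod_walk n 0 a l1 /\ mod_walk n 0 b l1,
                     mod_walk n a e l2 & mod_walk n b 0 l2].
Proof.
move=> a0 an bn ba; case: (boolP (odd a == odd (minn b (n - b)))) => /eqP parity.
  have [b1 b2] : mod_walk n 0 b a /\ mod_walk n b 0 (N - a) by apply: mod_walk_loop; lia.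
  exists N, a, (N - a); split=> //; [by right | lia | |].
  - by split=> //; apply: (@mod_walk_intro _ _ _ _ a 0 0 0); lia.
  - by apply: (@mod_walk_intro _ _ _ _ (N - a) 0 0 0); lia.
have [b1 b2] : mod_walk n 0 b (n - a) /\ mod_walk n b 0 (N - (n - a)).
  by apply: mod_walk_loop; lia.
exists 1, (n - a), (a - 1); split; [by left | lia | | | by have -> : a - 1 = N - (n - a) by lia].
- by split=> //; apply: (@mod_walk_intro _ _ _ _ 0 (n - a) 1 0); lia.
- by apply: (@mod_walk_intro _ _ _ _ 0 (a - 1) 0 0); lia.
Qed.

Lemma odd_mod_step a b :
  odd (a %% n) -> b = a.+1 %[mod n] \/ a = b.+1 %[mod n] -> ~~ odd (b %% n).
Proof.
have := ltn_pmod a (ltn0Sn N); have := ltn_pmod b (ltn0Sn N).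
move=> bn an odd_a [-> | ab].
  by rewrite -[a.+1]addn1 -modnDml modn_small; lia.
have [bN | ->] : b %% n < N \/ b %% n = N by lia.
  by move: ab; rewrite -[b.+1]addn1 -modnDml (modn_small (_ : _ + 1 < _)); lia.
by rewrite odd_double.
Qed.

End OddCycle.

Lemma card_set_rows (T1 T2 : finType) (S : {set T1 * T2}) :
  #|S| = \sum_(b : T2) #|[set x | (x, b) \in S]|.
Proof.
rewrite -sum1_card big_mkcond /= (eq_bigr (fun u => (fun x b => (x, b) \in S : nat) u.1 u.2));
  last by case=> x b _; case: ifP.
rewrite -(pair_big predT predT (fun x b => ((x, b) \in S : nat))) exchange_big /=.
by apply: eq_bigr => b _; rewrite -sum1_card [RHS]big_mkcond; apply: eq_bigr => x _; rewrite inE.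
Qed.

Lemma leq_card_cover_frel (T : finType) (f : T -> T) (R : {set T}) :
  injective f -> (forall x, (x \in R) || (f x \in R)) -> #|T| <= #|R|.*2.
Proof.
move=> f_inj cover.
have disj : ~: R :&: f @: (~: R) = set0.
  apply/setP => y; rewrite !inE; apply/negP => /andP [yR /imsetP [x]].
  by rewrite inE => xR y_fx; move: (cover x); rewrite -y_fx (negbTE xR) (negbTE yR).
have := cardsU (~: R) (f @: (~: R)); rewrite disj cards0 subn0 card_imset // => cardU.
have := max_card (~: R :|: f @: (~: R)); rewrite cardU; have := cardsC R; lia.
Qed.

Lemma card_even_ord k : #|[set i : 'I_k.*2.+1 | ~~ odd i]| = k.+1.
Proof.
rewrite -sum1_card big_mkcond /= (eq_bigr (fun i : 'I_k.*2.+1 => (~~ odd i : nat)));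
  last by move=> i _; rewrite inE; case: (odd i).
rewrite -(big_mkord xpredT (fun i => (~~ odd i : nat))).
elim: k => [|k IH]; first by rewrite big_nat1.
by rewrite doubleS big_nat_recr // big_nat_recr //= IH odd_double addn1 addn0.
Qed.

Section OddCycleProduct.
Variable k : nat.
Hypothesis k_gt0 : 0 < k.
Local Notation N := k.*2.
Local Notation n := k.*2.+1.
Local Notation C := (cycle_graph n).
Local Notation V := ('I_n * 'I_n)%type.
Local Notation P := (direct_prod C C).

Lemma walkn_cycle_prodP l (u v : V) :
  walkn P l u v <-> mod_walk n u.1 v.1 l /\ mod_walk n u.2 v.2 l.
Proof.
rewrite walkn_direct_prod; split=> [/andP [/cycle_walknP ? /cycle_walknP ?] // | [uv1 uv2]].
by apply/andP; split; apply/cycle_walknP.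
Qed.

Lemma dist_cycle_prod (u v : V) : walkn P (dist P u v) u v /\ dist P u v <= N.
Proof.
apply: dist_min; last by rewrite card_prod card_ord; nia.
by apply/walkn_cycle_prodP; split; apply: mod_walk_diam.
Qed.

Definition box_adj (u w : V) : bool :=
  (u.2 == w.2) && C u.1 w.1 || (u.1 == w.1) && C u.2 w.2.

Lemma box_adj_sym : symmetric box_adj.
Proof.
move=> u w; rewrite /box_adj (eq_sym u.2) (eq_sym u.1).
by rewrite (cycle_graph_sym _ u.1) (cycle_graph_sym _ u.2).
Qed.

(* A shorter walk would be closed in one coordinate, so of even length, and
   would join two neighbours of the odd cycle in the other, so of odd length. *)
Lemma box_adj_walkn_ge (u w : V) l : box_adj u w -> walkn P l u w -> N <= l.
Proof.
move=> adj /walkn_cycle_prodP [walk1 walk2]; rewrite leqNgt; apply/negP => lN.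
have even_l (x : 'I_n) : mod_walk n x x l -> ~~ odd l.
  by move/mod_walk_refl_even; apply; lia.
case/orP: adj => /andP [/eqP eq_uw adj_uw].
  by move: walk2; rewrite eq_uw => /even_l; rewrite (cycle_graph_walk_odd adj_uw walk1 lN).
by move: walk1; rewrite eq_uw => /even_l; rewrite (cycle_graph_walk_odd adj_uw walk2 lN).
Qed.

Lemma box_adj_dist (u w : V) : box_adj u w -> dist P u w = N.
Proof.
move=> adj; have [walk_d d_le] := dist_cycle_prod u w.
by have := box_adj_walkn_ge adj walk_d; lia.
Qed.

Lemma box_adj_neq (u w : V) : box_adj u w -> u != w.
Proof.
move=> adj; apply/eqP => uw.
have : N <= 0 by apply: (box_adj_walkn_ge adj); rewrite walkn0 uw.
by lia.
Qed.

Lemma strongly_resolves_box_adj (u v w : V) :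
  box_adj u v -> strongly_resolves P w u v -> w = u \/ w = v.
Proof.
move=> adj; apply: (strongly_resolves_far (box_adj_neq adj))
  (dist_cycle_prod u w).2 (dist_cycle_prod v w).2.
  by move=> l; apply: box_adj_walkn_ge.
by move=> l; apply: box_adj_walkn_ge; rewrite box_adj_sym.
Qed.

Lemma strong_resolving_set_box_adj (S : {set V}) (u v : V) :
  strong_resolving_set P S -> box_adj u v -> (u \in S) || (v \in S).
Proof.
move=> /forallP /(_ u) /forallP /(_ v) /implyP res adj.
have /existsP [w /andP [wS]] := res (box_adj_neq adj).
by case/(strongly_resolves_box_adj adj) => <-; rewrite wS ?orbT.
Qed.

Lemma strong_resolving_set_card_ge (S : {set V}) :
  strong_resolving_set P S -> n * k.+1 <= #|S|.
Proof.
move=> res; rewrite card_set_rows -[n in n * _]card_ord -sum_nat_const.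
apply: leq_sum => b _.
suff : #|'I_n| <= #|[set x | (x, b) \in S]|.*2.
  by rewrite card_ord ltn_double.
apply: (leq_card_cover_frel (@ordS_inj n)) => x; rewrite !inE.
by apply: strong_resolving_set_box_adj res _; rewrite /box_adj /= eqxx cycle_graph_ordS.
Qed.

Definition even_sum_set : {set V} := [set u : V | ~~ odd ((u.1 + u.2) %% n)].

Lemma card_even_sum_set : #|even_sum_set| = n * k.+1.
Proof.
rewrite card_set_rows -[n in n * _]card_ord -sum_nat_const; apply: eq_bigr => b _.
pose shift (x : 'I_n) : 'I_n := inord ((x + b) %% n).
have shift_inj : injective shift.
  move=> x y /(congr1 (@nat_of_ord _)) /eqP; rewrite /shift !inordK ?ltn_pmod // eqn_modDr.
  by rewrite !(modn_small (ltn_ord _)) => /eqP /val_inj.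
rewrite -(card_even_ord k) -[RHS](card_preimset _ shift_inj).
by apply: eq_card => x; rewrite !inE inordK ?ltn_pmod.
Qed.

Lemma box_adj_sum (u w : V) : box_adj u w ->
  w.1 + w.2 = (u.1 + u.2).+1 %[mod n] \/ u.1 + u.2 = (w.1 + w.2).+1 %[mod n].
Proof.
case: u w => [x1 x2] [y1 y2] /orP [] /andP [/eqP /= <-];
  rewrite cycle_graphE => /orP [] /eqP e.
- by left; rewrite -modnDml e modnDml addSn.
- by right; rewrite -modnDml e modnDml addSn.
- by left; rewrite -modnDmr e modnDmr addnS.
- by right; rewrite -modnDmr e modnDmr addnS.
Qed.

Lemma box_adj_even_sum_set (u w : V) :
  u \notin even_sum_set -> box_adj u w -> w \in even_sum_set.
Proof. by rewrite !inE negbK => odd_u /box_adj_sum; apply: odd_mod_step. Qed.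

Lemma exists_box_adj_walkn (u v : V) : u != v ->
  exists w l1 l2, [/\ box_adj u w, l1 + l2 = N, walkn P l1 u v & walkn P l2 v w].
Proof.
case: u v => x1 x2 [y1 y2].
wlog ba : x1 x2 y1 y2 / minn (offset x2 y2) (n - offset x2 y2) <=
                        minn (offset x1 y1) (n - offset x1 y1).
  move=> main uv.
  case: (leqP (minn (offset x2 y2) (n - offset x2 y2)) (minn (offset x1 y1) (n - offset x1 y1))).
    by move=> ba; apply: main.
  move/ltnW=> ab.
  have /(main _ _ _ _ ab) [[w2 w1] [l1 [l2 [adj l12 walk_uv walk_vw]]]] : (x2, x1) != (y2, y1).
    by move: uv; rewrite !xpair_eqE andbC.
  exists (w1, w2), l1, l2; split=> //; first by rewrite /box_adj orbC.
    by move/walkn_cycle_prodP: walk_uv => [? ?]; apply/walkn_cycle_prodP.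
  by move/walkn_cycle_prodP: walk_vw => [? ?]; apply/walkn_cycle_prodP.
move=> uv; have a_pos : 0 < offset x1 y1.
  by move: uv ba; rewrite xpair_eqE -!offset_eq0; have := offset_lt x2 y2; lia.
have [e [l1 [l2 [e_step l12 [walk_a walk_b] walk_ae walk_b0]]]] :=
  mod_walk_split a_pos (offset_lt x1 y1) (offset_lt x2 y2) ba.
have [w1 x1w1 x1e] := exists_cycle_graph_step x1 e_step.
exists (w1, x2), l1, l2; split=> //; first by rewrite /box_adj /= eqxx x1w1.
  by apply/walkn_cycle_prodP; split; [apply: (mod_walk_transl (c := x1)) walk_a
    | apply: (mod_walk_transl (c := x2)) walk_b]; rewrite ?addn0 ?addn_offset.
by apply/walkn_cycle_prodP; split; [apply: (mod_walk_transl (c := x1)) walk_ae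
  | apply: (mod_walk_transl (c := x2)) walk_b0]; rewrite ?addn0 ?addn_offset.
Qed.

Lemma exists_box_adj_interval (u v : V) :
  u != v -> exists2 w, box_adj u w & in_interval P u w v.
Proof.
case/exists_box_adj_walkn=> w [l1 [l2 [adj l12 walk_uv walk_vw]]].
by exists w => //; apply: in_interval_cat walk_uv walk_vw _; rewrite box_adj_dist.
Qed.

Lemma even_sum_set_srs : strong_resolving_set P even_sum_set.
Proof.
apply/forallP => u; apply/forallP => v; apply/implyP => uv; apply/existsP.
case: (boolP (u \in even_sum_set)) => uS.
  by exists u; rewrite uS /strongly_resolves (in_interval_last (dist_cycle_prod v u).1) orbT.
case: (boolP (v \in even_sum_set)) => vS.
  by exists v; rewrite vS /strongly_resolves (in_interval_last (dist_cycle_prod u v).1).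
have [w adj uwv] := exists_box_adj_interval uv.
by exists w; rewrite (box_adj_even_sum_set uS adj) /strongly_resolves uwv.
Qed.

End OddCycleProduct.

Theorem proposition31 (k : nat) (hk : 0 < k) :
  dim_s (direct_prod (cycle_graph k.*2.+1) (cycle_graph k.*2.+1))
  = k.*2.+1 * k.+1.
Proof.
apply/anti_leq/andP; split.
  by rewrite -(card_even_sum_set k); apply/dim_s_le/even_sum_set_srs.
apply: dim_s_ge => [|S]; first by rewrite card_prod card_ord; nia.
exact: strong_resolving_set_card_ge.
Qed.
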